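(* Let $\Lambda\subset\mathbb{P}^3$ be an irreducible quadric cone and $Q\subset\mathbb{P}^3$ a smooth quadric, over an algebraically closed field of characteristic not $2$. Let $\widehat{Q}\subset\widehat{\mathbb{P}}^3$ be the dual quadric, $\widehat{\Lambda}\subset\widehat{\mathbb{P}}^3$ the plane dual to the vertex of $\Lambda$, and $\widehat{\lambda}\subset\widehat{\Lambda}$ the conic parametrizing the tangent planes of $\Lambda$. Then the pencil $\langle\Lambda,Q\rangle$ contains a reducible but reduced quadric if and only if $\widehat{\lambda}$ is bitangent to $\widehat{Q}$, and it contains a non-reduced quadric if and only if $\widehat{\lambda}\subset\widehat{Q}$.
   Context: $\widehat{\lambda}$ is said to be bitangent to $\widehat{Q}$ if $\widehat{\lambda}\not\subset\widehat{Q}$ and $\widehat{\lambda}$ is tangent to $\widehat{Q}$ at every point of $\widehat{\lambda}\cap\widehat{Q}$. *)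

(* Projective space P^3 over K: nonzero column vectors in
   'cV[K]_4 up to scalars. A quadric is given by a symmetric 4x4 matrix A,
   with equation x^T A x = 0. Planes (points of the dual P^3) are nonzero
   column vectors u, the plane being { x | u^T x = 0 }. *)
From HB Require Import structures.
From mathcomp Require Import all_boot all_order all_algebra.
Set Implicit Arguments. Unset Strict Implicit. Unset Printing Implicit Defensive.
Import Order.TTheory GRing.Theory Num.Theory.
Local Open Scope ring_scope.

Section Quadrics.
Variable K : fieldType.

Definition bil (A : 'M[K]_4) (x y : 'cV[K]_4) : K := (x^T *m A *m y) 0 0.
Definition qf (A : 'M[K]_4) (x : 'cV[K]_4) : K := bil A x x.
Definition lin (l : 'rV[K]_4) (x : 'cV[K]_4) : K := (l *m x) 0 0.

Definition symmetric (A : 'M[K]_4) : Prop := A^T = A.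

Definition reducible (A : 'M[K]_4) : Prop :=
  exists l1 l2 : 'rV[K]_4, forall x, qf A x = lin l1 x * lin l2 x.

Definition nonreduced (A : 'M[K]_4) : Prop :=
  exists (c : K) (l : 'rV[K]_4), forall x, qf A x = c * (lin l x) ^+ 2.

(* singular points (Jacobian criterion, char <> 2): gradient 2 A x = 0 *)
Definition singular_point (A : 'M[K]_4) (x : 'cV[K]_4) : Prop :=
  x != 0 /\ A *m x = 0.

Definition smooth_quadric (A : 'M[K]_4) : Prop :=
  symmetric A /\ A != 0 /\ forall x, ~ singular_point A x.

Definition irreducible_quadric_cone (A : 'M[K]_4) : Prop :=
  symmetric A /\ ~ reducible A /\ exists v, singular_point A v.

Definition pencil_member (L Q M : 'M[K]_4) : Prop :=
  exists a b : K, (a != 0 \/ b != 0) /\ M = a *: L + b *: Q.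

Definition dual_quadric (Q : 'M[K]_4) : 'M[K]_4 := invmx Q.

Definition on_quadric (A : 'M[K]_4) (u : 'cV[K]_4) : Prop :=
  u != 0 /\ qf A u = 0.

(* lambda^ : the tangent planes of the cone L, i.e. the planes L x for x a
   smooth point of L (x on L, L x <> 0). These lie in the plane Lambda^ dual
   to the vertex. *)
Definition on_lambda_hat (L : 'M[K]_4) (u : 'cV[K]_4) : Prop :=
  u != 0 /\ exists x, qf L x = 0 /\ u = L *m x.

(* tangent line of the conic lambda^ at the point u (= L x): the image under
   the (linear) parametrization y |-> L y of the tangent plane
   T_x Lambda = { y | x^T L y = 0 } = { y | u^T y = 0 }. *)
Definition on_tangent_line_lambda_hat (L : 'M[K]_4) (u w : 'cV[K]_4) : Prop :=
  exists y, lin u^T y = 0 /\ w = L *m y.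

Definition on_tangent_plane (D : 'M[K]_4) (u w : 'cV[K]_4) : Prop :=
  bil D u w = 0.

Definition tangent_at (L Q : 'M[K]_4) (u : 'cV[K]_4) : Prop :=
  forall w, on_tangent_line_lambda_hat L u w ->
    on_tangent_plane (dual_quadric Q) u w.

Definition lambda_hat_sub_Q_hat (L Q : 'M[K]_4) : Prop :=
  forall u, on_lambda_hat L u -> on_quadric (dual_quadric Q) u.

Definition bitangent (L Q : 'M[K]_4) : Prop :=
  ~ lambda_hat_sub_Q_hat L Q /\
  forall u, on_lambda_hat L u -> on_quadric (dual_quadric Q) u -> tangent_at L Q u.

End Quadrics.

From Pilot Require Import Defs.
From HB Require Import structures.
From mathcomp Require Import all_boot all_order all_algebra.
From mathcomp Require Import ring zify.
From Stdlib Require Import Classical.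
Set Implicit Arguments. Unset Strict Implicit. Unset Printing Implicit Defensive.
Import GRing.Theory.
Local Open Scope ring_scope.

(* Put S := L Q^-1 L, so that qf S x is the dual quadric Q^ evaluated at the tangent plane
   L x of the cone, and consider the pencil N t := L - t Q together with
   M t := S - t L = N t Q^-1 L.  As L has rank 3 and kills the vertex, which N t does not
   kill for t != 0, rank (M t) = rank (N t) - 1.  Non-reduced members of the pencil are
   those of rank 1 and reduced reducible ones those of rank 2, so it suffices to show:
   - some M t vanishes iff S vanishes on the cone, i.e. lambda^ lies on Q^; this is the
     statement that a quadric vanishing on an irreducible quadric is a multiple of it;
   - some M t has rank 1 iff lambda^ is bitangent to Q^.  If M t is a double plane, then
     on the cone qf S = qf (M t) is a square, so it vanishes doubly wherever it vanishes.
     Conversely, bitangency at a common point x1 (two conics do meet) puts x1 in the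
     kernel of some M nu, and tangency at the further common points cone_proj x1 y
     forces the kernel of M nu to have dimension 3. *)

Section BilinearForm.
Variable K : fieldType.
Implicit Types (A B : 'M[K]_4) (x y z : 'cV[K]_4) (l : 'rV[K]_4) (a b : K).

Lemma bilDl A x y z : bil A (x + y) z = bil A x z + bil A y z.
Proof. by rewrite /bil linearD /= !mulmxDl mxE. Qed.

Lemma bilDr A x y z : bil A x (y + z) = bil A x y + bil A x z.
Proof. by rewrite /bil !mulmxDr mxE. Qed.

Lemma bilZl A a x y : bil A (a *: x) y = a * bil A x y.
Proof. by rewrite /bil linearZ /= -!scalemxAl mxE. Qed.

Lemma bilZr A a x y : bil A x (a *: y) = a * bil A x y.
Proof. by rewrite /bil -!scalemxAr mxE. Qed.

Lemma bil_mxD A B x y : bil (A + B) x y = bil A x y + bil B x y.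
Proof. by rewrite /bil mulmxDr mulmxDl mxE. Qed.

Lemma bil_mxZ A a x y : bil (a *: A) x y = a * bil A x y.
Proof. by rewrite /bil -scalemxAr -scalemxAl mxE. Qed.

Lemma bil_mxB A B x y : bil (A - B) x y = bil A x y - bil B x y.
Proof. by rewrite bil_mxD -scaleN1r bil_mxZ mulN1r. Qed.

Lemma bil_mulmx A B x y : bil (B^T *m A *m B) x y = bil A (B *m x) (B *m y).
Proof. by rewrite /bil trmx_mul !mulmxA. Qed.

Lemma bil_ker A x y : A *m y = 0 -> bil A x y = 0.
Proof. by move=> Ay; rewrite /bil -mulmxA Ay mulmx0 mxE. Qed.

Lemma bil_delta A i j : bil A (delta_mx i 0) (delta_mx j 0) = A i j.
Proof. by rewrite /bil trmx_delta -rowE -colE !mxE. Qed.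

Lemma bil_outer l1 l2 x y : bil (l1^T *m l2) x y = lin l1 x * lin l2 y.
Proof. by rewrite /bil /lin mulmxA -mulmxA -trmx_mul mxE big_ord1 mxE. Qed.

Lemma bil_sym A x y : Defs.symmetric A -> bil A x y = bil A y x.
Proof.
move=> symA; rewrite /bil.
have -> : (y^T *m A *m x) 0 0 = ((y^T *m A *m x)^T) 0 0 by rewrite [RHS]mxE.
by rewrite !trmx_mul trmxK symA mulmxA.
Qed.

Lemma qf_lincomb A a b x y : Defs.symmetric A ->
  qf A (a *: x + b *: y) = a ^+ 2 * qf A x + 2%:R * a * b * bil A x y + b ^+ 2 * qf A y.
Proof. by move=> symA; rewrite /qf bilDl !bilDr !bilZl !bilZr (bil_sym y x symA); ring. Qed.

Lemma qf_addZ A x y b : Defs.symmetric A ->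
  qf A (x + b *: y) = qf A x + 2%:R * b * bil A x y + b ^+ 2 * qf A y.
Proof. by move=> symA; rewrite -[x in LHS]scale1r qf_lincomb //; ring. Qed.

Lemma linDl l1 l2 x : lin (l1 + l2) x = lin l1 x + lin l2 x.
Proof. by rewrite /lin mulmxDl mxE. Qed.

Lemma linZl a l x : lin (a *: l) x = a * lin l x.
Proof. by rewrite /lin -scalemxAl mxE. Qed.

Lemma linDr l x y : lin l (x + y) = lin l x + lin l y.
Proof. by rewrite /lin mulmxDr mxE. Qed.

Lemma linZr l a x : lin l (a *: x) = a * lin l x.
Proof. by rewrite /lin -scalemxAr mxE. Qed.

Lemma lin_trmx A x y : Defs.symmetric A -> lin (A *m x)^T y = bil A x y.
Proof. by move=> symA; rewrite /lin trmx_mul symA. Qed.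

Lemma lin_delta l j : lin l (delta_mx j 0) = l 0 j.
Proof. by rewrite /lin -colE !mxE. Qed.

Lemma lin_eq1 l : l != 0 -> exists y, lin l y = 1.
Proof.
move=> nz_l; have /existsP[k lk] : [exists k, l 0 k != 0].
  by apply: contraR nz_l => /existsPn lz; apply/eqP/rowP => k; rewrite mxE; apply/eqP/negPn/lz.
by exists ((l 0 k)^-1 *: delta_mx k 0); rewrite linZr lin_delta mulVf.
Qed.

Lemma lin_proportional l1 l2 : l1 != 0 ->
  (forall y, lin l1 y = 0 -> lin l2 y = 0) -> exists nu, forall y, lin l2 y = nu * lin l1 y.
Proof.
move=> nz_l1 ker12; have [y0 l1y0] := lin_eq1 nz_l1.
exists (lin l2 y0) => y.
have := ker12 (y + (- lin l1 y) *: y0).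
rewrite linDr linZr l1y0 mulr1 subrr => /(_ erefl).
by rewrite linDr linZr => e; rewrite -[LHS]subr0 -e; ring.
Qed.

Lemma mul_trmx_bil A x y : x^T *m (A *m y) = (bil A x y)%:M.
Proof. by rewrite mulmxA [LHS]mx11_scalar. Qed.

Lemma mul_trmx_eq0 A x y : (x^T *m (A *m y) == 0) = (bil A x y == 0).
Proof. by rewrite mul_trmx_bil -scalemx1 scaler_eq0 oner_eq0 orbF. Qed.

Lemma mul_trmx_bil0 A x y : bil A x y = 0 -> x^T *m (A *m y) = 0.
Proof. by move=> Axy; apply/eqP; rewrite mul_trmx_eq0 Axy. Qed.

Lemma bil_eq0_ker A x : (forall y, bil A y x = 0) -> A *m x = 0.
Proof.
move=> Ax; apply/colP => i; rewrite [RHS]mxE -(Ax (delta_mx i 0)).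
by rewrite /bil trmx_delta -rowE -row_mul [RHS]mxE.
Qed.

End BilinearForm.

Section Rank.
Variable K : fieldType.
Implicit Types (A N : 'M[K]_4) (x e : 'cV[K]_4) (l w : 'rV[K]_4).

Lemma sym_entry A i j : Defs.symmetric A -> A i j = A j i.
Proof. by move=> symA; rewrite -{1}symA mxE. Qed.

Lemma rank_outer l w : (\rank (l^T *m w) <= 1)%N.
Proof. exact: leq_trans (mxrankM_maxl _ _) (rank_leq_col _). Qed.

Lemma sym_rank1 A : Defs.symmetric A -> (\rank A <= 1)%N ->
  exists (k : K) w, A = k *: (w^T *m w).
Proof.
move=> symA rankA; have [->|nzA] := eqVneq A 0; first by exists 0, 0; rewrite scale0r.
have [w wA nz_w] := rowV0Pn nzA.
have eq_wA : (w == A)%MS.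
  have rank_w : \rank w = 1%N by rewrite rank_rV nz_w.
  by rewrite -(mxrank_leqif_eq wA).2 rank_w eqn_leq rankA andbT lt0n mxrank_eq0.
have Aw : (A <= w)%MS by case/andP: eq_wA.
have /existsP[k wk] : [exists k, w 0 k != 0].
  by apply: contraR nz_w => /existsPn wz; apply/eqP/rowP => j; rewrite mxE; apply/eqP/negPn/wz.
have entry i j : A i j = A i k * w 0 j / w 0 k.
  have [a rowi] := sub_rVP (submx_trans (row_sub i A) Aw).
  have rowiE c : A i c = a * w 0 c by have := congr1 (fun r : 'rV[K]_4 => r 0 c) rowi; rewrite !mxE.
  by rewrite !rowiE; field.
exists (A k k / w 0 k ^+ 2), w; apply/matrixP => i j.
by rewrite entry (sym_entry _ _ symA) entry !mxE big_ord1 !mxE; field.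
Qed.

Lemma ltn_rank_adds m n p (B : 'M[K]_(m, n)) (r : 'rV[K]_n) (F : 'M[K]_(n, p)) :
  B *m F = 0 -> r *m F != 0 -> (\rank B < \rank (B + r)%MS)%N.
Proof.
move=> BF rF; apply: rank_ltmx; rewrite ltmxE addsmxSl /=.
apply: contra rF => BrB; apply/eqP/sub_kermxP.
by apply: submx_trans (addsmxSr B r) (submx_trans BrB _); apply/sub_kermxP.
Qed.

Lemma addsmx_mul0 m1 m2 n p (B : 'M[K]_(m1, n)) (C : 'M[K]_(m2, n)) (F : 'M[K]_(n, p)) :
  B *m F = 0 -> C *m F = 0 -> (B + C)%MS *m F = 0.
Proof. by move=> /sub_kermxP BF /sub_kermxP CF; apply/sub_kermxP; rewrite addsmx_sub BF. Qed.

Lemma sym_row_ker A x : Defs.symmetric A -> A *m x = 0 -> (x^T <= kermx A)%MS.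
Proof. by move=> symA Ax; apply/sub_kermxP; rewrite -symA -trmx_mul Ax trmx0. Qed.

Lemma isotropic_rank1_ker A x : Defs.symmetric A -> (\rank A <= 1)%N -> qf A x = 0 -> A *m x = 0.
Proof.
move=> symA /(sym_rank1 symA)[k [w ->]]; rewrite /qf bil_mxZ bil_outer -expr2 => /eqP.
rewrite mulf_eq0 expf_eq0 /= => kwx.
rewrite -scalemxAl -mulmxA [w *m x]mx11_scalar mul_mx_scalar scalerA -/(lin w x).
by case/orP: kwx => /eqP ->; rewrite ?mul0r ?mulr0 scale0r.
Qed.

Lemma smooth_quadric_unit A : smooth_quadric A -> A \in unitmx.
Proof.
case=> symA [_ smoothA]; rewrite -row_free_unit -kermx_eq0.
apply/rowV0Pn => -[r /sub_kermxP rA nz_r]; apply: (smoothA r^T).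
by split; [rewrite trmx_eq0 | rewrite -symA -trmx_mul rA trmx0].
Qed.

(* The deflated form kills e and the kernel of N, while e is not in that kernel. *)
Lemma mxrank_deflate N e : Defs.symmetric N -> qf N e != 0 ->
  (\rank ((N *m e) *m (N *m e)^T - qf N e *: N)%R < \rank N)%N.
Proof.
move=> symN Ne; set a := N *m e; set D := _ - _.
have eN : e^T *m N = a^T by rewrite /a trmx_mul symN.
have kerN_a : kermx N *m a = 0 by rewrite /a mulmxA mulmx_ker mul0mx.
have e_a : e^T *m a != 0 by rewrite mul_trmx_eq0.
have kerD : (kermx N + e^T <= kermx D)%MS.
  rewrite addsmx_sub; apply/andP; split; apply/sub_kermxP.
    by rewrite /D mulmxBr mulmxA kerN_a mul0mx -scalemxAr mulmx_ker scaler0 subr0.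
  by rewrite /D mulmxBr mulmxA mul_trmx_bil -scalemxAr eN mul_scalar_mx subrr.
have := mxrankS kerD; have := ltn_rank_adds kerN_a e_a; rewrite !mxrank_ker.
by have := rank_leq_row N; have := rank_leq_row D; lia.
Qed.

End Rank.

Section CharNot2.
Variable K : fieldType.
Hypothesis two_neq0 : (2%:R : K) != 0.
Implicit Types (A B : 'M[K]_4) (x : 'cV[K]_4).

Lemma sym_qf_inj A B : Defs.symmetric A -> Defs.symmetric B ->
  (forall x, qf A x = qf B x) -> A = B.
Proof.
move=> symA symB eqAB; apply/matrixP => i j; rewrite -!bil_delta.
set di := delta_mx i 0; set dj := delta_mx j 0.
have polar C : Defs.symmetric C -> 2%:R * bil C di dj = qf C (di + dj) - qf C di - qf C dj.
  by move=> symC; rewrite -[dj in qf C (di + dj)]scale1r qf_addZ //; ring.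
by apply: (mulfI two_neq0); rewrite !polar // !eqAB.
Qed.

Lemma reducible_rank A : Defs.symmetric A -> reducible A -> (\rank A <= 2)%N.
Proof.
move=> symA [l1 [l2 Al]].
have -> : A = 2%:R^-1 *: (l1^T *m l2 + l2^T *m l1).
  apply: sym_qf_inj => //.
    by rewrite /Defs.symmetric linearZ /= linearD /= !trmx_mul !trmxK addrC.
  by move=> x; rewrite Al /qf bil_mxZ bil_mxD !bil_outer; field.
apply: leq_trans (mxrank_scale _ _) _; apply: leq_trans (mxrank_add _ _) _.
by rewrite -[2%N]/(1 + 1)%N leq_add ?rank_outer.
Qed.

Lemma nonreducedP A : Defs.symmetric A -> nonreduced A <-> (\rank A <= 1)%N.
Proof.
move=> symA; split => [[c [l Al]]|/(sym_rank1 symA)[k [w ->]]].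
  have -> : A = c *: (l^T *m l).
    apply: sym_qf_inj => //; first by rewrite /Defs.symmetric linearZ /= trmx_mul trmxK.
    by move=> x; rewrite Al /qf bil_mxZ bil_outer expr2.
  exact: leq_trans (mxrank_scale _ _) (rank_outer _ _).
by exists k, w => x; rewrite /qf bil_mxZ bil_outer expr2.
Qed.

End CharNot2.

Section ClosedField.
Variable K : closedFieldType.
Hypothesis two_neq0 : (2%:R : K) != 0.
Implicit Types (a b c k : K) (A N : 'M[K]_4) (x y : 'cV[K]_4).

Lemma exists_root n (a : nat -> K) : a n.+1 != 0 ->
  exists s, \sum_(i < n.+2) a i * s ^+ i = 0.
Proof.
move=> lead; have [s Es] := @solve_monicpoly K n.+1 (fun i => - a i / a n.+1) isT.
exists s; rewrite big_ord_recr /= Es mulr_sumr -big_split big1 //= => i _.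
by field.
Qed.

Lemma sqrt_exists k : exists r, r ^+ 2 = k.
Proof.
have [r] := @exists_root 1 (nth 0 [:: - k; 0; 1]) (oner_neq0 _).
by rewrite !big_ord_recr big_ord0 /= => Er; exists r; rewrite -[RHS]addr0 -Er; ring.
Qed.

Lemma quadratic_root_or a b c :
  (exists s, a + 2%:R * b * s + c * s ^+ 2 = 0) \/ (b = 0 /\ c = 0).
Proof.
have [c0|cnz] := eqVneq c 0; last first.
  have [s] := @exists_root 1 (nth 0 [:: a; 2%:R * b; c]) cnz.
  by rewrite !big_ord_recr big_ord0 /= => Es; left; exists s; rewrite -Es; ring.
have [b0|bnz] := eqVneq b 0; first by right.
by left; exists (- a / (2%:R * b)); rewrite c0; field; rewrite two_neq0 bnz.
Qed.

Lemma two_roots a b c : c != 0 -> b ^+ 2 - a * c != 0 ->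
  exists s1 s2, [/\ s1 != s2, a + 2%:R * b * s1 + c * s1 ^+ 2 = 0
                            & a + 2%:R * b * s2 + c * s2 ^+ 2 = 0].
Proof.
move=> cnz disc_nz; have [r Er] := sqrt_exists (b ^+ 2 - a * c).
have rnz : r != 0 by apply: contraNneq disc_nz => r0; rewrite -Er r0 expr0n.
have root s : s * c = - b + r \/ s * c = - b - r -> a + 2%:R * b * s + c * s ^+ 2 = 0.
  move=> Es; apply: (mulfI cnz); rewrite mulr0.
  have -> : c * (a + 2%:R * b * s + c * s ^+ 2) = (s * c + b) ^+ 2 - (b ^+ 2 - a * c) by ring.
  by rewrite -Er; case: Es => ->; ring.
exists ((- b + r) / c), ((- b - r) / c); split.
- apply: contraNneq rnz => /(congr1 (fun s => s * c)); rewrite !mulfVK // => /addrI/eqP.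
  by rewrite -subr_eq0 opprK -mulr2n -mulr_natl mulf_eq0 (negPf two_neq0).
- by apply: root; left; field.
- by apply: root; right; field.
Qed.

Lemma quadratic_mul_eq0 a0 a1 a2 b0 b1 b2 : a2 != 0 ->
  (forall s, (a0 + a1 * s + a2 * s ^+ 2) * (b0 + b1 * s + b2 * s ^+ 2) = 0) -> b0 = 0.
Proof.
move=> a2nz vanish; set p := Poly [:: a0; a1; a2]; set q := Poly [:: b0; b1; b2].
have pE s : p.[s] = a0 + a1 * s + a2 * s ^+ 2 by rewrite horner_Poly /=; ring.
have qE s : q.[s] = b0 + b1 * s + b2 * s ^+ 2 by rewrite horner_Poly /=; ring.
have pq0 : p * q = 0.
  by apply/eqP/contraT => /closed_nonrootP[s]; rewrite /root hornerM pE qE vanish eqxx.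
have p_nz : p != 0.
  by apply: contraNneq a2nz => p0; rewrite -[a2](coef_Poly [:: a0; a1; a2] 2) -/p p0 coef0.
have /eqP q0 : q == 0 by move/eqP: pq0; rewrite mulf_eq0 (negPf p_nz).
by have := qE 0; rewrite q0 horner0; move=> ->; ring.
Qed.

Lemma reducibleP A : Defs.symmetric A -> reducible A <-> (\rank A <= 2)%N.
Proof.
move=> symA; split; first exact: reducible_rank.
move=> rankA; have [[e Ae]|isoA] := classic (exists e, qf A e != 0); last first.
  exists 0, 0 => x; rewrite /lin mul0mx mxE mul0r.
  by apply/eqP/negPn/negP => Ax; apply: isoA; exists x.
set c := qf A e; pose D := A *m e *m (A *m e)^T - c *: A.
have symD : Defs.symmetric D.
  by rewrite /D /Defs.symmetric linearB linearZ /= trmx_mul trmxK symA.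
have rankD : (\rank D <= 1)%N by have := mxrank_deflate symA Ae; rewrite -/c -/D; lia.
have [k [w Dk]] := sym_rank1 symD rankD.
have [r Er] := sqrt_exists k.
set a := (A *m e)^T.
exists (c^-1 *: (a + (- r) *: w)), (a + r *: w) => x.
have := congr1 (fun M => qf M x) Dk.
have -> : D = a^T *m a - c *: A by rewrite trmxK.
rewrite /qf bil_mxB !bil_mxZ !bil_outer -/(qf A x) => Ex.
have -> : qf A x = (lin a x * lin a x - k * (lin w x * lin w x)) / c by rewrite -Ex; field.
by rewrite linZl !linDl !linZl -Er; field.
Qed.

Lemma reducible_reducedP A : Defs.symmetric A ->
  reducible A /\ ~ nonreduced A <-> \rank A = 2%N.
Proof. by move=> symA; rewrite (reducibleP symA) (nonreducedP two_neq0 symA); split; lia. Qed.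

End ClosedField.

Section IrreducibleCone.
Variables (K : closedFieldType) (L : 'M[K]_4).
Hypotheses (two_neq0 : (2%:R : K) != 0) (symL : Defs.symmetric L) (irrL : ~ reducible L).
Implicit Types (v x y z u : 'cV[K]_4) (M S : 'M[K]_4).

Lemma bil_neq0_smooth x z : bil L x z != 0 -> L *m z != 0.
Proof. by apply: contra_neq => /(bil_ker x). Qed.

Lemma tangent_plane_not_in_cone x : L *m x != 0 ->
  exists y0 u, [/\ bil L x y0 = 1, bil L x u = 0 & qf L u != 0].
Proof.
move=> Lx; have Lx_tr : (L *m x)^T != 0 by rewrite trmx_eq0.
have [y0] := lin_eq1 Lx_tr; rewrite lin_trmx // => x_y0.
(* Otherwise the whole tangent plane at x lies on the cone, and then
   qf L z = bil L x z * (2 bil L y0 z - qf L y0 * bil L x z). *)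
exists y0; apply: NNPP => cone_tangent; apply: irrL.
exists (L *m x)^T, (2%:R *: (L *m y0)^T + (- qf L y0) *: (L *m x)^T) => z.
set a := bil L x z; set w := z + (- a) *: y0.
have Lw : qf L w = 0.
  apply: NNPP => Lw; apply: cone_tangent; exists w; split; [exact: x_y0 | | exact/eqP].
  by rewrite /w bilDr bilZr x_y0 mulr1 addrN.
have {1}-> : z = w + a *: y0 by rewrite /w -addrA -scalerDl addNr scale0r addr0.
rewrite qf_addZ // Lw linDl !linZl !lin_trmx // -/a /w bilDl bilZl (bil_sym z y0 symL).
by rewrite -/(qf L y0); ring.
Qed.

(* For bil L x y = 1, the second point where the line through x and y meets the cone. *)
Definition cone_proj x y := 2%:R *: y + (- qf L y) *: x.

Lemma bil_cone_proj x y : qf L x = 0 -> bil L x (cone_proj x y) = 2%:R * bil L x y.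
Proof. by move=> Lx; rewrite bilDr !bilZr -/(qf L x) Lx mulr0 addr0. Qed.

Lemma qf_cone_proj x y : qf L x = 0 -> bil L x y = 1 -> qf L (cone_proj x y) = 0.
Proof. by move=> Lx xy; rewrite qf_lincomb // (bil_sym y x symL) xy Lx; ring. Qed.

Lemma cone_proj_smooth x y : qf L x = 0 -> bil L x y = 1 -> L *m cone_proj x y != 0.
Proof. by move=> Lx xy; apply: (@bil_neq0_smooth x); rewrite bil_cone_proj // xy mulr1. Qed.

Lemma common_smooth_point S x0 : Defs.symmetric S -> qf L x0 = 0 -> L *m x0 != 0 ->
  exists x1, [/\ qf L x1 = 0, L *m x1 != 0 & qf S x1 = 0].
Proof.
move=> symS Lx0 smooth_x0; have [S0|Snz] := eqVneq (qf S x0) 0; first by exists x0.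
have [y0 [u [x0y0 x0u Lu]]] := tangent_plane_not_in_cone smooth_x0.
set c := qf S x0; set R0 := qf L y0; set R1 := bil L y0 u; set R2 := qf L u.
set P0 := qf S y0; set P1 := bil S y0 u; set P2 := qf S u.
set B0 := bil S y0 x0; set B1 := bil S u x0.
(* qf S (cone_proj x0 (y0 + s u)) is a quartic in s with leading coefficient c * R2 ^+ 2 *)
have [s Es] := @exists_root _ 3 (nth 0
  [:: 4%:R * P0 - 4%:R * R0 * B0 + c * R0 ^+ 2;
      8%:R * P1 - 4%:R * R0 * B1 - 8%:R * R1 * B0 + 4%:R * c * R0 * R1;
      4%:R * P2 - 8%:R * R1 * B1 - 4%:R * R2 * B0 + c * (4%:R * R1 ^+ 2 + 2%:R * R0 * R2);
      - 4%:R * R2 * B1 + 4%:R * c * R1 * R2;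
      c * R2 ^+ 2]) (mulf_neq0 Snz (expf_neq0 2 Lu)).
rewrite !big_ord_recr big_ord0 /= in Es.
have x0y : bil L x0 (y0 + s *: u) = 1 by rewrite bilDr bilZr x0y0 x0u mulr0 addr0.
exists (cone_proj x0 (y0 + s *: u)).
split; [exact: qf_cone_proj | exact: cone_proj_smooth |].
rewrite qf_lincomb // !qf_addZ // bilDl bilZl -Es /c /R0 /R1 /R2 /P0 /P1 /P2 /B0 /B1; ring.
Qed.

Section Nullstellensatz.
Variables (D : 'M[K]_4) (p : 'cV[K]_4).
Hypotheses (symD : Defs.symmetric D) (Lp : qf L p != 0) (Dp : qf D p = 0)
  (D_on_cone : forall x, qf L x = 0 -> qf D x = 0).

Let disc y := bil L y p ^+ 2 - qf L y * qf L p.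

(* when disc y != 0 the line through y and p meets the cone in two points *)
Lemma qf_eq0_disc y : disc y != 0 -> qf D y = 0.
Proof.
move=> disc_y; have [s1 [s2 [s12 Ls1 Ls2]]] := two_roots two_neq0 Lp disc_y.
have on_D s : qf L y + 2%:R * bil L y p * s + qf L p * s ^+ 2 = 0 ->
    qf D y + 2%:R * s * bil D y p = 0.
  move=> Ls; have : qf L (y + s *: p) = 0 by rewrite qf_addZ // -Ls; ring.
  by move/D_on_cone; rewrite qf_addZ // Dp mulr0 addr0.
have := on_D _ Ls1; have := on_D _ Ls2 => D2 D1.
have : 2%:R * (s1 - s2) * bil D y p = 0.
  by rewrite -[RHS](subrr 0) -{1}D1 -D2; ring.
move/eqP; rewrite !mulf_eq0 subr_eq0 (negPf two_neq0) (negPf s12) /= => /eqP Dyp.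
by move: D1; rewrite Dyp mulr0 addr0.
Qed.

Lemma exists_disc_neq0 : exists z, disc z != 0.
Proof.
apply: NNPP => disc0; apply: irrL; exists ((qf L p)^-1 *: (p^T *m L)), (p^T *m L) => x.
have /eqP : disc x = 0 by apply: NNPP => /eqP disc_x; apply: disc0; exists x.
rewrite subr_eq0 => /eqP Ex; rewrite linZl.
change (lin (p^T *m L) x) with (bil L p x); rewrite (bil_sym p x symL).
by rewrite -mulrA -expr2 Ex mulrC mulfK.
Qed.

Lemma qf_eq0_cone_ideal y : qf D y = 0.
Proof.
have [z disc_z] := exists_disc_neq0.
apply: (@quadratic_mul_eq0 _ (disc y)
  (2%:R * (bil L y p * bil L z p - bil L y z * qf L p)) (disc z) _
  (2%:R * bil D y z) (qf D z) disc_z) => s.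
have -> : disc y + 2%:R * (bil L y p * bil L z p - bil L y z * qf L p) * s + disc z * s ^+ 2
    = disc (y + s *: z) by rewrite /disc qf_addZ // bilDl bilZl; ring.
have -> : qf D y + 2%:R * bil D y z * s + qf D z * s ^+ 2 = qf D (y + s *: z).
  by rewrite qf_addZ //; ring.
by have [->|/qf_eq0_disc ->] := eqVneq (disc (y + s *: z)) 0; rewrite ?mul0r ?mulr0.
Qed.

End Nullstellensatz.

Lemma cone_ideal S : Defs.symmetric S -> (forall x, qf L x = 0 -> qf S x = 0) ->
  exists mu, S = mu *: L.
Proof.
move=> symS S_on_cone; have [p Lp] : exists p, qf L p != 0.
  apply: NNPP => L0; apply: irrL; exists 0, 0 => x; rewrite /lin mul0mx mxE mul0r.
  by apply: NNPP => /eqP Lx; apply: L0; exists x.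
set mu := qf S p / qf L p; exists mu.
have symD : Defs.symmetric (S - mu *: L).
  by rewrite /Defs.symmetric linearB linearZ /= symS symL.
apply: sym_qf_inj => //; first by rewrite /Defs.symmetric linearZ /= symL.
move=> x; apply/eqP; rewrite -subr_eq0 /qf -bil_mxB; apply/eqP.
apply: (qf_eq0_cone_ideal symD Lp) => [|y Ly].
  by rewrite /qf bil_mxB bil_mxZ /mu mulfVK ?subrr.
by rewrite /qf bil_mxB bil_mxZ -/(qf S y) -/(qf L y) Ly S_on_cone // mulr0 subr0.
Qed.

Section TangentFrame.
Variables (v x1 y0 u : 'cV[K]_4).
Hypotheses (nz_v : v != 0) (Lv : L *m v = 0) (Lx1 : qf L x1 = 0).
Hypotheses (x1y0 : bil L x1 y0 = 1) (x1u : bil L x1 u = 0) (Lu : qf L u != 0).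

Lemma vertex_mul_trmx y : v^T *m (L *m y) = 0.
Proof. by apply: mul_trmx_bil0; rewrite (bil_sym v y symL) bil_ker. Qed.

Lemma vertex_point_mul_trmx : (v^T + x1^T)%MS *m (L *m x1) = 0.
Proof. by rewrite addsmx_mul0 ?vertex_mul_trmx ?mul_trmx_bil0. Qed.

Lemma rank_vertex_point : (2 <= \rank (v^T + x1^T)%MS)%N.
Proof.
have x1_Ly0 : x1^T *m (L *m y0) != 0 by rewrite mul_trmx_eq0 x1y0 oner_neq0.
by have := ltn_rank_adds (vertex_mul_trmx y0) x1_Ly0; rewrite rank_rV trmx_eq0 nz_v.
Qed.

Lemma rank_tangent_frame : (4 <= \rank (v^T + x1^T + u^T + y0^T)%MS)%N.
Proof.
have vx1_Lu : (v^T + x1^T)%MS *m (L *m u) = 0.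
  by rewrite addsmx_mul0 ?vertex_mul_trmx ?mul_trmx_bil0.
have u_Lu : u^T *m (L *m u) != 0 by rewrite mul_trmx_eq0.
have vx1u_Lx1 : (v^T + x1^T + u^T)%MS *m (L *m x1) = 0.
  by rewrite addsmx_mul0 ?vertex_point_mul_trmx ?mul_trmx_bil0 // (bil_sym _ _ symL).
have y0_Lx1 : y0^T *m (L *m x1) != 0.
  by rewrite mul_trmx_eq0 (bil_sym _ _ symL) x1y0 oner_neq0.
have := ltn_rank_adds vx1_Lu u_Lu; have := ltn_rank_adds vx1u_Lx1 y0_Lx1.
by have := rank_vertex_point; lia.
Qed.

End TangentFrame.

Lemma rank_le1_cone_kernel v x1 M : v != 0 -> L *m v = 0 -> qf L x1 = 0 -> L *m x1 != 0 ->
  Defs.symmetric M -> M *m v = 0 -> M *m x1 = 0 ->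
  (forall y, bil L x1 y = 1 -> qf M y = 0 -> M *m y = 0) -> (\rank M <= 1)%N.
Proof.
move=> nz_v Lv Lx1 smooth_x1 symM Mv Mx1 isoM.
have [y0 [u [x1y0 x1u Lu]]] := tangent_plane_not_in_cone smooth_x1.
have rank_le1 (w f : 'cV[K]_4) :
    M *m w = 0 -> (v^T + x1^T)%MS *m f = 0 -> w^T *m f != 0 -> (\rank M <= 1)%N.
  move=> Mw vx1_f w_f; have := ltn_rank_adds vx1_f w_f.
  have := rank_vertex_point nz_v Lv x1y0.
  have /mxrankS : (v^T + x1^T + w^T <= kermx M)%MS by rewrite !addsmx_sub !sym_row_ker.
  by rewrite mxrank_ker; have := rank_leq_row M; lia.
have [[s Ms]|[M_y0u M_u]] := quadratic_root_or two_neq0 (qf M y0) (bil M y0 u) (qf M u).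
  have x1y : bil L x1 (y0 + s *: u) = 1 by rewrite bilDr bilZr x1y0 x1u mulr0 addr0.
  have My : M *m (y0 + s *: u) = 0 by apply: isoM x1y _; rewrite qf_addZ // -Ms; ring.
  apply: (rank_le1 _ _ My (vertex_point_mul_trmx Lv Lx1)).
  by rewrite mul_trmx_eq0 (bil_sym _ x1 symL) x1y oner_neq0.
(* otherwise u is M-orthogonal to the whole frame v, x1, u, y0 *)
have Mu : M *m u = 0.
  have /mxrankS : (v^T + x1^T + u^T + y0^T <= kermx (M *m u))%MS.
    rewrite !addsmx_sub -!andbA; apply/and4P.
    by split; apply/sub_kermxP/mul_trmx_bil0; rewrite // (bil_sym _ _ symM) bil_ker.
  have := rank_tangent_frame nz_v Lv Lx1 x1y0 x1u Lu.
  rewrite mxrank_ker => ? ?; have /eqP : \rank (M *m u) = 0%N by lia.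
  by rewrite mxrank_eq0 => /eqP.
apply: (rank_le1 _ (L *m u) Mu); last by rewrite mul_trmx_eq0.
by rewrite addsmx_mul0 ?(vertex_mul_trmx Lv) ?mul_trmx_bil0.
Qed.

End IrreducibleCone.

Section Pencil.
Variables (K : fieldType) (L Q : 'M[K]_4).
Hypotheses (symL : Defs.symmetric L) (symQ : Defs.symmetric Q) (unitQ : Q \in unitmx).
Implicit Types (v x y : 'cV[K]_4) (t mu : K) (M : 'M[K]_4).

Definition pencil t := L - t *: Q.
(* qf dual_pullback x is the value of the dual quadric at the tangent plane L x *)
Definition dual_pullback := L *m invmx Q *m L.
Definition dual_pencil t := dual_pullback - t *: L.

Lemma pencil_member_pencil t : pencil_member L Q (pencil t).
Proof. by exists 1, (- t); rewrite scale1r scaleNr; split; first by left; apply: oner_neq0. Qed.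

Lemma sym_dual_pullback : Defs.symmetric dual_pullback.
Proof. by rewrite /Defs.symmetric !trmx_mul trmx_inv symL symQ mulmxA. Qed.

Lemma sym_dual_pencil t : Defs.symmetric (dual_pencil t).
Proof. by rewrite /Defs.symmetric linearB linearZ /= sym_dual_pullback symL. Qed.

Lemma bil_dual_pullback x y : bil (invmx Q) (L *m x) (L *m y) = bil dual_pullback x y.
Proof. by rewrite -bil_mulmx symL. Qed.

Lemma bil_dual_pencil t x y : bil (dual_pencil t) x y = bil dual_pullback x y - t * bil L x y.
Proof. by rewrite bil_mxB bil_mxZ. Qed.

Lemma dual_pencilE t : dual_pencil t = pencil t *m invmx Q *m L.
Proof. by rewrite /dual_pencil /pencil !mulmxBl -!scalemxAl mulmxV // mul1mx. Qed.

Lemma rank_pencil_le t : \rank L = 3%N -> (\rank (pencil t) <= \rank (dual_pencil t) + 1)%N.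
Proof.
move=> rankL; have := mxrank_mul_min (pencil t) (invmx Q *m L).
rewrite mulmxA -dual_pencilE eqmxMfull ?row_full_unit ?unitmx_inv // rankL.
lia.
Qed.

Lemma rank_dual_pencil_lt t v : v != 0 -> L *m v = 0 -> t != 0 ->
  (\rank (dual_pencil t) < \rank (pencil t))%N.
Proof.
move=> nz_v Lv nz_t; set N := pencil t.
have vN : v^T *m N != 0.
  rewrite /N /pencil mulmxBr -{1}symL -trmx_mul Lv trmx0 sub0r -scalemxAr.
  rewrite oppr_eq0 scaler_eq0 negb_or nz_t.
  by rewrite mulmx_free_eq0 ?row_free_unit // trmx_eq0.
have := ltn_rank_adds (mulmx_ker N) vN.
have /mxrankS : (kermx N + v^T <= kermx (dual_pencil t))%MS.
  rewrite addsmx_sub; apply/andP; split; apply/sub_kermxP.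
    by rewrite dual_pencilE !mulmxA mulmx_ker !mul0mx.
  by rewrite -(sym_dual_pencil t) -trmx_mul dual_pencilE -!mulmxA Lv !mulmx0 trmx0.
rewrite !mxrank_ker; have := rank_leq_row N; have := rank_leq_row (dual_pencil t); lia.
Qed.

Lemma pencil0 : pencil 0 = L.
Proof. by rewrite /pencil scale0r subr0. Qed.

Lemma rank_pencil_pair t mu : t != mu -> (4 <= \rank (pencil t) + \rank (pencil mu))%N.
Proof.
move=> t_mu; have := mxrank_add (pencil t) (- pencil mu).
have -> : pencil t - pencil mu = (mu - t) *: Q.
  by rewrite /pencil scalerBl opprB addrC addrA subrK addrC.
have nz_mu_t : mu - t != 0 by rewrite subr_eq0 eq_sym.
by rewrite mxrank_opp mxrank_scale_nz // (mxrank_unit unitQ).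
Qed.

Lemma sym_pencil_member M : pencil_member L Q M -> Defs.symmetric M.
Proof. by case=> a [b [_ ->]]; rewrite /Defs.symmetric linearD !linearZ /= symL symQ. Qed.

Lemma pencil_member_rankP (P : 'M[K]_4 -> Prop) (p : nat -> Prop) :
  (forall M, pencil_member L Q M -> P M <-> p (\rank M)) -> (forall n, p n -> n <= 3)%N ->
  (exists M, pencil_member L Q M /\ P M) <-> exists t, p (\rank (pencil t)).
Proof.
move=> PpM p_le3; split=> [[M [memM PM]]|[t pt]]; last first.
  by exists (pencil t); split; last apply/PpM; rewrite //; apply: pencil_member_pencil.
have {PM} := (PpM M memM).1 PM; case: memM => a [b [ab ->]] PM.
have [a0|nz_a] := eqVneq a 0.
  move: ab PM; rewrite a0 scale0r add0r => -[/eqP //|nz_b].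
  by rewrite mxrank_scale_nz // mxrank_unit // => /p_le3.
exists (- b / a); move: PM.
have -> : a *: L + b *: Q = a *: pencil (- b / a).
  by rewrite /pencil scalerBr scalerA mulrCA mulfV // mulr1 scaleNr opprK.
by rewrite mxrank_scale_nz.
Qed.

Lemma sub_dual_quadricP :
  lambda_hat_sub_Q_hat L Q <-> forall x, qf L x = 0 -> qf dual_pullback x = 0.
Proof.
split=> [sub x Lx|on_cone u [nz_u [x [Lx def_u]]]]; last first.
  by subst u; split=> //; rewrite /dual_quadric /qf bil_dual_pullback; apply: on_cone.
rewrite /qf -bil_dual_pullback.
have [->|nz_Lx] := eqVneq (L *m x) 0; first by rewrite bil_ker ?mulmx0.
by case: (sub (L *m x)) => //; split=> //; exists x.
Qed.

Lemma tangent_atP x :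
  tangent_at L Q (L *m x) <-> forall y, bil L x y = 0 -> bil dual_pullback x y = 0.
Proof.
rewrite /tangent_at /on_tangent_line_lambda_hat /on_tangent_plane /dual_quadric.
split=> [tangent y xy|tangent _ [y [xy ->]]].
  by rewrite -bil_dual_pullback; apply: tangent; exists y; rewrite lin_trmx.
by rewrite bil_dual_pullback tangent // -lin_trmx.
Qed.

Lemma bitangentP : bitangent L Q <->
  ~ (forall x, qf L x = 0 -> qf dual_pullback x = 0) /\
  (forall x, qf L x = 0 -> L *m x != 0 -> qf dual_pullback x = 0 ->
     forall y, bil L x y = 0 -> bil dual_pullback x y = 0).
Proof.
rewrite /bitangent sub_dual_quadricP; apply: and_iff_compat_l.
split=> [tangent x Lx nz_Lx Sx|tangent u [nz_u [x [Lx def_u]]] [_ Sx]]; last subst u.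
all: apply/tangent_atP.
  by apply: tangent; split=> //; [exists x | rewrite /qf bil_dual_pullback].
by apply: tangent => //; rewrite /qf -bil_dual_pullback.
Qed.

Lemma dual_pencil_ker_uniq t mu x z : dual_pencil t *m x = 0 -> dual_pencil mu *m z = 0 ->
  bil L x z != 0 -> t = mu.
Proof.
move=> Mx Mz xz; have := bil_ker z Mx; have := bil_ker x Mz.
rewrite !bil_dual_pencil (bil_sym z x sym_dual_pullback) (bil_sym z x symL) => /eqP.
by rewrite subr_eq0 => /eqP -> /eqP; rewrite subr_eq0 => /eqP /(mulIf xz).
Qed.

Lemma tangent_dual_pencil_ker x : L *m x != 0 ->
  (forall y, bil L x y = 0 -> bil dual_pullback x y = 0) -> exists nu, dual_pencil nu *m x = 0.
Proof.
move=> nz_Lx tangent; have symS := sym_dual_pullback.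
have : (L *m x)^T != 0 by rewrite trmx_eq0.
move=> /(@lin_proportional _ _ (dual_pullback *m x)^T)[y|nu Snu].
  by rewrite !lin_trmx //; apply: tangent.
exists nu; apply: bil_eq0_ker => y.
rewrite (bil_sym y x (sym_dual_pencil nu)) bil_dual_pencil.
by move: (Snu y); rewrite !lin_trmx // => ->; rewrite subrr.
Qed.

End Pencil.

Section ConeAndSmoothQuadric.
Variables (K : closedFieldType) (L Q : 'M[K]_4).
Hypotheses (two_neq0 : (2%:R : K) != 0)
  (coneL : irreducible_quadric_cone L) (smoothQ : smooth_quadric Q).
Implicit Types (x y z : 'cV[K]_4) (t : K).

Let symL : Defs.symmetric L := proj1 coneL.
Let irrL : ~ reducible L := proj1 (proj2 coneL).
Let symQ : Defs.symmetric Q := proj1 smoothQ.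
Let unitQ : Q \in unitmx := smooth_quadric_unit smoothQ.
Let symS : Defs.symmetric (dual_pullback L Q) := sym_dual_pullback symL symQ.
Local Notation S := (dual_pullback L Q).
Local Notation N := (pencil L Q).
Local Notation M := (dual_pencil L Q).

Lemma rank_cone : \rank L = 3%N.
Proof.
have [v [nz_v Lv]] := proj2 (proj2 coneL).
have /mxrankS : (v^T <= kermx L)%MS := sym_row_ker symL Lv.
rewrite mxrank_ker rank_rV trmx_eq0 nz_v => ker_v.
have : ~ (\rank L <= 2)%N by move/(reducibleP two_neq0 symL).
have := rank_leq_row L; lia.
Qed.

Lemma sub_dual_quadric_rank1 :
  (forall x, qf L x = 0 -> qf S x = 0) <-> exists t, (\rank (N t) <= 1)%N.
Proof.
split=> [/(cone_ideal two_neq0 symL irrL symS)[mu S_mu]|[t rank_t] x Lx].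
  exists mu; have := rank_pencil_le unitQ mu rank_cone.
  by rewrite /dual_pencil S_mu subrr mxrank0.
have [v [nz_v Lv]] := proj2 (proj2 coneL).
have nz_t : t != 0 by apply: contraTneq rank_t => ->; rewrite pencil0 rank_cone.
have /eqP : \rank (M t) = 0%N.
  by have := rank_dual_pencil_lt symL symQ unitQ nz_v Lv nz_t; lia.
rewrite mxrank_eq0 subr_eq0 => /eqP ->.
by rewrite /qf bil_mxZ -/(qf L x) Lx mulr0.
Qed.

Lemma rank2_bitangent t : \rank (N t) = 2%N -> bitangent L Q.
Proof.
move=> rank_t; apply/(bitangentP Q symL); split.
  move/sub_dual_quadric_rank1 => [mu rank_mu].
  have t_mu : t != mu by apply: contraTneq rank_mu => <-; rewrite rank_t.
  by have := rank_pencil_pair L unitQ t_mu; lia.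
move=> x Lx _ Sx y xy.
have [v [nz_v Lv]] := proj2 (proj2 coneL).
have nz_t : t != 0 by apply/eqP => t0; move: rank_t; rewrite t0 pencil0 rank_cone.
have := rank_dual_pencil_lt symL symQ unitQ nz_v Lv nz_t; rewrite rank_t ltnS => rank_Mt.
have Mtx : M t *m x = 0.
  apply: isotropic_rank1_ker (sym_dual_pencil symL symQ t) rank_Mt _.
  by rewrite /qf bil_dual_pencil -!/(qf _ x) Sx Lx mulr0 subr0.
have := bil_dual_pencil L Q t x y.
by rewrite (bil_sym x y (sym_dual_pencil symL symQ t)) (bil_ker y Mtx) xy mulr0 subr0.
Qed.

(* Tangency at the point cone_proj x1 y of the cone. *)
Lemma isotropic_dual_pencil_ker nu x1 :
  (forall x, qf L x = 0 -> L *m x != 0 -> qf S x = 0 ->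
     forall y, bil L x y = 0 -> bil S x y = 0) ->
  qf L x1 = 0 -> M nu *m x1 = 0 ->
  forall y, bil L x1 y = 1 -> qf (M nu) y = 0 -> M nu *m y = 0.
Proof.
move=> tangent Lx1 Mx1 y x1y My; have symM := sym_dual_pencil symL symQ nu.
set z := cone_proj L x1 y.
have Lz : qf L z = 0 := qf_cone_proj symL Lx1 x1y.
have smooth_z : L *m z != 0 := cone_proj_smooth two_neq0 Lx1 x1y.
have Mz : qf (M nu) z = 0.
  by rewrite qf_lincomb // My (bil_ker y Mx1) /qf (bil_ker x1 Mx1); ring.
have Sz : qf S z = 0 by move: Mz; rewrite /qf bil_dual_pencil -/(qf L z) Lz mulr0 subr0.
have [nu2 Mz2] := tangent_dual_pencil_ker symL symQ smooth_z (tangent z Lz smooth_z Sz).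
have x1z : bil L x1 z != 0 by rewrite bil_cone_proj // x1y mulr1.
have nu_eq := dual_pencil_ker_uniq symL symQ Mx1 Mz2 x1z.
move: Mz2; rewrite -nu_eq /z /cone_proj mulmxDr -!scalemxAr Mx1 scaler0 addr0 => /eqP.
by rewrite scaler_eq0 (negPf two_neq0) => /eqP.
Qed.

Lemma bitangent_rank2 : bitangent L Q -> exists t, \rank (N t) = 2%N.
Proof.
move=> /(bitangentP Q symL)[not_sub tangent].
have [x0 [Lx0 Sx0]] : exists x0, qf L x0 = 0 /\ qf S x0 != 0.
  by apply: NNPP => none; apply: not_sub => x Lx; apply: NNPP => /eqP Sx; apply: none; exists x.
have smooth_x0 : L *m x0 != 0.
  by apply: contraNneq Sx0 => Lx0_0; rewrite /qf -bil_dual_pullback // Lx0_0 bil_ker ?mulmx0.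
have [x1 [Lx1 smooth_x1 Sx1]] := common_smooth_point two_neq0 symL irrL symS Lx0 smooth_x0.
have [nu Mx1] := tangent_dual_pencil_ker symL symQ smooth_x1 (tangent x1 Lx1 smooth_x1 Sx1).
have symM := sym_dual_pencil symL symQ nu.
have [v [nz_v Lv]] := proj2 (proj2 coneL).
have Mv : M nu *m v = 0 by rewrite dual_pencilE // -!mulmxA Lv !mulmx0.
have := rank_le1_cone_kernel two_neq0 symL irrL nz_v Lv Lx1 smooth_x1 symM Mv Mx1
  (isotropic_dual_pencil_ker tangent Lx1 Mx1).
have := rank_pencil_le unitQ nu rank_cone.
have : ~ (\rank (N nu) <= 1)%N by move=> rank1; apply/not_sub/sub_dual_quadric_rank1; exists nu.
by exists nu; lia.
Qed.

Lemma bitangent_rank2P : bitangent L Q <-> exists t, \rank (N t) = 2%N.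
Proof. by split=> [|[t]]; [apply: bitangent_rank2 | apply: rank2_bitangent]. Qed.

End ConeAndSmoothQuadric.

Theorem lemma6p5 (K : closedFieldType) (hK : (2%:R : K) != 0)
  (L Q : 'M[K]_4) (hL : irreducible_quadric_cone L) (hQ : smooth_quadric Q) :
  ((exists M, pencil_member L Q M /\ reducible M /\ ~ nonreduced M)
     <-> bitangent L Q) /\
  ((exists M, pencil_member L Q M /\ nonreduced M)
     <-> lambda_hat_sub_Q_hat L Q).
Proof.
have [symL _] := hL; have [symQ _] := hQ; have unitQ := smooth_quadric_unit hQ.
have symM := sym_pencil_member symL symQ.
split.
- apply: (iff_trans (pencil_member_rankP (p := fun n => n = 2%N) unitQ _ _)).
  + move=> M memM; exact: (reducible_reducedP hK (symM M memM)).
  + by move=> n ->.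
  exact: iff_sym (bitangent_rank2P hK hL hQ).
- apply: (iff_trans (pencil_member_rankP (p := fun n => (n <= 1)%N) unitQ _ _)).
  + move=> M memM; exact: (nonreducedP hK (symM M memM)).
  + by move=> n /leq_trans->.
  exact: iff_sym (iff_trans (sub_dual_quadricP Q symL) (sub_dual_quadric_rank1 hK hL hQ)).
Qed.
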